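(* Let $t\ge 2$ be an integer. For every integer $n\ge 1$, $$ex(n,n,n,K_{2,t}) \le \frac{3}{2}\, n\Big(1+\sqrt{2(t-1)(n-1)+1}\Big).$$
   Context: $K_{2,t}$ denotes the complete bipartite graph with parts of sizes $2$ and $t$. For an integer $n\ge1$, $ex(n,n,n,K_{2,t})$ is the maximum number of edges in a tripartite graph with three vertex classes each of size $n$ (edges only between different classes) that contains no subgraph isomorphic to $K_{2,t}$. *)

From mathcomp Require Import all_boot.
From Stdlib Require Import Reals.

Set Implicit Arguments.
Unset Strict Implicit.
Unset Printing Implicit Defensive.

(* Vertices of the tripartite host: class index in 'I_3, position in 'I_n. *)
Definition tvert (n : nat) : finType := ('I_3 * 'I_n)%type.

Definition simple_graph (V : finType) (e : rel V) : Prop :=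
  (forall x y, e x y = e y x) /\ (forall x, e x x = false).

Definition tripartite (n : nat) (e : rel (tvert n)) : Prop :=
  simple_graph e /\ (forall x y : tvert n, e x y -> x.1 != y.1).

Definition num_edges (V : finType) (e : rel V) : nat :=
  #|[set s : {set V} | [exists x, exists y, (x != y) && (s == [set x; y]) && e x y]]|.

(* e contains a (not necessarily induced) copy of K_{2,t}: two distinct
   vertices a, b and a set S of t vertices, each adjacent to both a and b. *)
Definition contains_K2t (V : finType) (t : nat) (e : rel V) : Prop :=
  exists a b : V, exists S : {set V},
    [/\ a != b, a \notin S, b \notin S, #|S| = t &
        forall z, z \in S -> e a z && e b z].

(* For a vertex v and a class C not containing v, let d(v, C) be the number
   of neighbours of v in C; the 6n numbers d(v, C) sum to s >= 2|E|.  Two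
   distinct vertices have at most t - 1 common neighbours, so counting ordered
   pairs of neighbours of v inside a common class gives
   sum d(v, C) (d(v, C) - 1) <= 3n(n - 1)(t - 1).  With Cauchy-Schwarz this is
   the quadratic inequality s^2 <= 6ns + 18(t - 1)n^2(n - 1), whose positive
   root is 3n(1 + sqrt(2(t - 1)(n - 1) + 1)). *)

From Stdlib Require Import Reals Lra.
From mathcomp Require Import all_boot zify.

Set Implicit Arguments.
Unset Strict Implicit.
Unset Printing Implicit Defensive.

Lemma sum_bool_card (T : finType) (P : pred T) :
  \sum_x (P x : nat) = #|[set x | P x]|.
Proof. by rewrite -sum1dep_card [RHS]big_mkcond; apply: eq_bigr => x _; case: (P x). Qed.

Lemma sum_bool_card_setD1 (T : finType) (P : pred T) (y : T) : P y ->
  \sum_z ((P z && (z != y)) : nat) = #|[set z | P z]| - 1.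
Proof.
move=> Py; rewrite sum_bool_card [in RHS](cardsD1 y) inE Py add1n subn1 /=.
by apply: eq_card => z; rewrite !inE andbC.
Qed.

Lemma card_ordered_pairs (T : finType) (P : pred T) :
  #|[set x | P x]| * (#|[set x | P x]| - 1) =
  \sum_y \sum_z ([&& P y, P z & y != z] : nat).
Proof.
rewrite -{1}sum_bool_card big_distrl /=; apply: eq_bigr => y _.
case Py: (P y); last by rewrite mul0n big1.
rewrite mul1n -(sum_bool_card_setD1 Py); apply: eq_bigr => z _.
by rewrite eq_sym.
Qed.

Lemma sqr_sum_le_card_sum_sqr (I : finType) (x : I -> nat) :
  (\sum_i x i) ^ 2 <= #|I| * \sum_i x i ^ 2.
Proof.
have sqr_sum : (\sum_i x i) ^ 2 = \sum_i \sum_j x i * x j.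
  by rewrite -mulnn big_distrl /=; apply: eq_bigr => i _; rewrite big_distrr.
have card_sum_sqr : 2 * (#|I| * \sum_i x i ^ 2) = \sum_i \sum_j (x i ^ 2 + x j ^ 2).
  rewrite [RHS](eq_bigr (fun i => #|I| * x i ^ 2 + \sum_j x j ^ 2)) => [|i _].
    by rewrite big_split /= -big_distrr sum_nat_const mul2n -addnn.
  by rewrite big_split /= sum_nat_const.
rewrite -(leq_pmul2l (isT : 0 < 2)) card_sum_sqr sqr_sum big_distrr /=.
apply: leq_sum => i _; rewrite big_distrr /=; apply: leq_sum => j _.
exact: (nat_Cauchy _ _).1.
Qed.

Lemma double_num_edges_le (V : finType) (e : rel V) :
  (forall x y, e x y = e y x) -> 2 * num_edges e <= \sum_v #|[set y | e v y]|.
Proof.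
move=> e_sym; rewrite /num_edges; set E := [set s | _].
have card_edge s : s \in E -> #|s| = 2.
  rewrite inE => /existsP [x /existsP [y /andP [/andP [xy /eqP ->] _]]].
  by rewrite cards2 xy.
have incident_le v : #|[set s in E | v \in s]| <= #|[set y | e v y]|.
  apply: (leq_trans _ (leq_imset_card (fun y => [set v; y]) _)).
  apply/subset_leq_card/subsetP => s; rewrite !inE => /andP [].
  move=> /existsP [x /existsP [y /andP [/andP [_ /eqP ->] exy]]].
  rewrite !inE => /orP [] /eqP ->.
  - by apply/imsetP; exists y; rewrite ?inE.
  - by apply/imsetP; exists x; [rewrite inE e_sym | rewrite setUC].
suff -> : 2 * #|E| = \sum_v #|[set s in E | v \in s]|.
  by apply: leq_sum => v _; apply: incident_le.
rewrite mulnC -sum_nat_const; transitivity (\sum_(s in E) \sum_(v in s) 1).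
  by apply: eq_bigr => s /card_edge <-; rewrite sum1_card.
by rewrite (exchange_big_dep predT) //=; apply: eq_bigr => v _; rewrite sum1dep_card.
Qed.

Lemma common_nbrs_le (V : finType) (t : nat) (e : rel V) :
  simple_graph e -> ~ contains_K2t t e ->
  forall y z, y != z -> #|[set v | e v y && e v z]| <= t - 1.
Proof.
move=> [e_sym e_irr] K2t_free y z yz; rewrite leqNgt; apply/negP => too_many.
have /card_geqP [s [s_uniq s_size s_sub]] : t <= #|[set v | e v y && e v z]| by lia.
apply: K2t_free; exists y, z, [set x in s]; split => //.
- by rewrite inE; apply/negP => /s_sub; rewrite inE e_irr.
- by rewrite inE; apply/negP => /s_sub; rewrite inE e_irr andbF.
- by rewrite cardsE -s_size; apply/card_uniqP.
- by move=> x; rewrite inE => /s_sub; rewrite inE (e_sym y) (e_sym z).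
Qed.

Lemma card_tvert n : #|tvert n| = 3 * n.
Proof. by rewrite card_prod !card_ord. Qed.

Lemma card_same_class_others n (y : tvert n) :
  \sum_z (((y.1 == z.1) && (y != z)) : nat) = n - 1.
Proof.
rewrite (eq_bigr (fun z => ((z.1 == y.1) && (z != y)) : nat)) => [|z _]; last first.
  by rewrite eq_sym (eq_sym y).
rewrite sum_bool_card_setD1 //.
have -> : [set z : tvert n | z.1 == y.1] = setX [set y.1] setT.
  by apply/setP => z; rewrite !inE andbT.
by rewrite cardsX cards1 cardsT card_ord mul1n.
Qed.

(* For [j : 'I_2], [lift c j] ranges over the two classes other than [c]. *)
Definition class_deg n (e : rel (tvert n)) (v : tvert n) (j : 'I_2) : nat :=
  #|[set y | (y.1 == lift v.1 j) && e v y]|.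

Definition class_deg_sum n (e : rel (tvert n)) : nat :=
  \sum_(p : tvert n * 'I_2) class_deg e p.1 p.2.

Section ClassDegrees.

Variables (n t : nat) (e : rel (tvert n)).
Hypothesis e_tri : tripartite e.

Lemma nbrs_le_sum_class_deg v : #|[set y | e v y]| <= \sum_j class_deg e v j.
Proof.
have [_ e_cross] := e_tri.
under eq_bigr => j _ do
  rewrite /class_deg -(sum_bool_card (fun y => (y.1 == lift v.1 j) && e v y)).
rewrite -sum_bool_card exchange_big /=; apply: leq_sum => y _.
case evy: (e v y) => //.
case: (unliftP v.1 y.1) => [j ->|y_same]; last first.
  by move: (e_cross _ _ evy); rewrite y_same eqxx.
by rewrite (bigD1 j) //= eqxx leq_addr.
Qed.

Lemma double_num_edges_le_class_deg_sum : 2 * num_edges e <= class_deg_sum e.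
Proof.
have [[e_sym _] _] := e_tri.
rewrite /class_deg_sum -(pair_bigA _ (fun v j => class_deg e v j)) /=.
apply: leq_trans (double_num_edges_le e_sym) _.
by apply: leq_sum => v _; apply: nbrs_le_sum_class_deg.
Qed.

Lemma class_deg_pairs_le_nbr_pairs v :
  \sum_j class_deg e v j * (class_deg e v j - 1) <=
  \sum_y \sum_z ([&& y.1 == z.1, e v y, e v z & y != z] : nat).
Proof.
under eq_bigr do rewrite /class_deg card_ordered_pairs.
rewrite exchange_big; apply: leq_sum => y _ /=.
rewrite exchange_big; apply: leq_sum => z _ /=.
(* Distinct classes [lift v.1 j] are disjoint, so at most one contains both. *)
case: (pickP (fun j => [&& (y.1 == lift v.1 j) && e v y,
                         (z.1 == lift v.1 j) && e v z & y != z]))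
  => [j0 y_z_j0|none]; last first.
  by rewrite big1 // => j _; rewrite none.
move: (y_z_j0) => /and3P [/andP [/eqP y_j0 evy] /andP [/eqP z_j0 evz] yz].
rewrite (bigD1 j0) //= y_z_j0 big1 => [|j j_j0]; last first.
  by rewrite y_j0 (inj_eq (@lift_inj _ _)) eq_sym (negbTE j_j0).
by rewrite y_j0 z_j0 eqxx evy evz yz.
Qed.

Hypothesis e_free : ~ contains_K2t t e.

Lemma class_deg_pairs_sum_le :
  \sum_(p : tvert n * 'I_2) class_deg e p.1 p.2 * (class_deg e p.1 p.2 - 1)
    <= (t - 1) * (3 * n * (n - 1)).
Proof.
have [e_simple _] := e_tri.
rewrite -(pair_bigA _ (fun v j => class_deg e v j * (class_deg e v j - 1))) /=.
apply: (@leq_trans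
  (\sum_v \sum_y \sum_z ([&& y.1 == z.1, e v y, e v z & y != z] : nat))).
  by apply: leq_sum => v _; apply: class_deg_pairs_le_nbr_pairs.
rewrite exchange_big /=.
apply: (@leq_trans (\sum_y \sum_z (((y.1 == z.1) && (y != z)) : nat) * (t - 1))).
  apply: leq_sum => y _; rewrite exchange_big /=; apply: leq_sum => z _.
  case yz: (y != z); last by rewrite big1 // => v _; rewrite !andbF.
  case same: (y.1 == z.1); last by rewrite big1.
  rewrite /= mul1n.
  apply: leq_trans _ (common_nbrs_le e_simple e_free yz); rewrite -sum_bool_card.
  by apply: eq_leq; apply: eq_bigr => v _; rewrite andbT.
under eq_bigr do rewrite -big_distrl /= card_same_class_others.
by rewrite sum_nat_const card_tvert [(t - 1) * _]mulnC mulnA.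
Qed.

Lemma class_deg_sum_sqr_le :
  class_deg_sum e ^ 2 <= 6 * n * class_deg_sum e + 18 * (t - 1) * (n ^ 2 * (n - 1)).
Proof.
have := sqr_sum_le_card_sum_sqr (fun p : tvert n * 'I_2 => class_deg e p.1 p.2).
rewrite card_prod card_tvert card_ord.
have -> : \sum_(p : tvert n * 'I_2) class_deg e p.1 p.2 ^ 2 =
    \sum_(p : tvert n * 'I_2) class_deg e p.1 p.2 * (class_deg e p.1 p.2 - 1)
    + class_deg_sum e.
  by rewrite -big_split; apply: eq_bigr => p _; case: (class_deg e p.1 p.2) => //=; nia.
have := class_deg_pairs_sum_le; rewrite -/(class_deg_sum e); nia.
Qed.

End ClassDegrees.

Open Scope R_scope.

Lemma le_quadratic_root (c r s : R) : 0 <= c -> 0 <= r ->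
  s * s <= 2 * c * s + c * c * (r * r - 1) -> s <= c * (1 + r).
Proof.
move=> c_ge0 r_ge0 quad; apply: Rnot_lt_le => big_s.
have cr_ge0 : 0 <= c * r by apply: Rmult_le_pos.
have : c * r < s - c by lra.
nra.
Qed.

Lemma INR_subn1 (m : nat) : (1 <= m)%N -> INR (m - 1) = INR m - 1.
Proof. by move=> /leP m_ge1; rewrite -minusE minus_INR. Qed.

Lemma edge_bound_of_quadratic (m s t n : nat) : (1 <= t)%N -> (1 <= n)%N ->
  (2 * m <= s)%N ->
  (s ^ 2 <= 6 * n * s + 18 * (t - 1) * (n ^ 2 * (n - 1)))%N ->
  INR m <= 3 / 2 * INR n * (1 + sqrt (2 * (INR t - 1) * (INR n - 1) + 1)).
Proof.
move=> t_ge1 n_ge1 /leP/le_INR edges /leP/le_INR quad.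
rewrite -!mulnn -multE -plusE !mult_INR !plus_INR !mult_INR !INR_subn1 // in edges quad.
set T := INR t in quad *; set N := INR n in quad *.
have T_ge1 : 1 <= T by apply: (le_INR 1); apply/leP.
have N_ge1 : 1 <= N by apply: (le_INR 1); apply/leP.
set K := 2 * (T - 1) * (N - 1) + 1.
have K_ge0 : 0 <= K by rewrite /K; nra.
rewrite /= in edges quad.
have : INR s <= 3 * N * (1 + sqrt K).
  apply: le_quadratic_root; [lra | exact: sqrt_pos | rewrite sqrt_sqrt // /K; lra].
lra.
Qed.

Theorem theorem1 (t n : nat) (Ht : leq 2 t) (Hn : leq 1 n)
  (e : rel (tvert n)) :
  tripartite e -> ~ contains_K2t t e ->
  INR (num_edges e) <=
    3 / 2 * INR n * (1 + sqrt (2 * (INR t - 1) * (INR n - 1) + 1)).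
Proof.
move=> e_tri e_free.
apply: edge_bound_of_quadratic (ltnW Ht) Hn _ _.
- exact: double_num_edges_le_class_deg_sum.
- exact: class_deg_sum_sqr_le.
Qed.
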